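(* For every $x\in X$ we have $p\in\omega_T(x)$, where $p=(v_{0,0},v_{1,0},v_{2,0},\ldots)$.
   Context: Paths and cycles: a graph is $G=(V,E)$ with $V$ finite and $E\subset V\times V$. A path is a finite sequence of vertices $(u_0,\dots,u_L)$ with $(u_j,u_{j+1})\in E$; its length is $|\cdot|=L$; a cycle is a path with $u_0=u_L$. For paths where one ends where the next starts, $+$ denotes concatenation and $a\,c$ means the cycle $c$ traversed $a$ times. Construction: $G_0=(V_0,E_0)$ with $V_0=\{v_{0,0}\}$, $E_0=\{e_{0,0}\}$, $e_{0,0}=(v_{0,0},v_{0,0})$. For $n\geq1$, $G_n=(V_n,E_n)$ consists of a vertex $v_{n,0}$, the loop $e_{n,0}=(v_{n,0},v_{n,0})$, and $n$ cycles $c_{n,1},\dots,c_{n,n}$, each starting and ending at $v_{n,0}$, whose vertices other than $v_{n,0}$ are pairwise distinct (within each cycle and across cycles); $V_n$ is the set of all these vertices and $E_n$ consists of $e_{n,0}$ and the edges of the cycles. The maps $\varphi_n\colon V_{n+1}\to V_n$ and the lengths of the cycles $c_{n+1,i}$ are defined together: $\varphi_n(v_{n+1,0})=v_{n,0}$, and for each $i$ a path $P_{n,i}$ in $G_n$ from $v_{n,0}$ to $v_{n,0}$ is given; $c_{n+1,i}$ has length $|P_{n,i}|$ and $\varphi_n$ maps its $j$-th vertex to the $j$-th vertex of $P_{n,i}$ (written $\varphi_n(c_{n+1,i})=P_{n,i}$). The paths are: $P_{0,1}=10\,e_{0,0}$; for $n\geq1$: $P_{n,i}=e_{n,0}+2c_{n,i}+2c_{n,i+1}+\dots+2c_{n,n}+e_{n,0}$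 for $2\leq i\leq n$; $P_{n,n+1}=(n+2)^2\big(\sum_{i=1}^n|c_{n,i}|\big)\,e_{n,0}$; and $P_{n,1}=(1\,e_{n,0}+2c_{n,1})+(2\,e_{n,0}+2c_{n,1})+\dots+(k_n\,e_{n,0}+2c_{n,1})+e_{n,0}+2c_{n,2}+\dots+2c_{n,n}+e_{n,0}$, where $k_n=2\big(1+\sum_{i=1}^n|c_{n,i}|\big)$. Let $X=\{x\in\prod_{n\geq0}V_n:\varphi_n(x_{n+1})=x_n\ \forall n\}$ with metric $d(x,y)=2^{-\min\{i:x_i\neq y_i\}}$ ($d(x,x)=0$); $X$ is a compact zero-dimensional metric space, and $T\colon X\to X$ defined by $T(x)=y$ iff $(x_n,y_n)\in E_n$ for all $n$ is a well-defined homeomorphism. Write $x_n$ for the $n$-th coordinate of $x$. $\omega_T(x)=\bigcap_{n\geq0}\overline{\{T^k(x):k\geq n\}}$. *)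

From mathcomp Require Import all_boot.
Set Implicit Arguments. Unset Strict Implicit. Unset Printing Implicit Defensive.

(* Vertices of every G_n are encoded as pairs of naturals:
   (0,0) is the hub v_{n,0}; (i,j) with 1 <= i <= n and 1 <= j < |c_{n,i}|
   is the j-th vertex of the cycle c_{n,i}. *)
Definition vtx := (nat * nat)%type.
Definition hub : vtx := (0, 0).

(* paths are nonempty vertex lists; concatenation p + q (last p = head q) *)
Definition pcat (p q : seq vtx) : seq vtx := p ++ behead q.
Definition pcats (ps : seq (seq vtx)) : seq vtx := foldr pcat [:: hub] ps.
Fixpoint rep (a : nat) (c : seq vtx) : seq vtx :=
  match a with 0 => [:: head hub c] | a'.+1 => pcat c (rep a' c) end.
(* a e_{n,0} : the loop traversed a times *)
Definition loopa (a : nat) : seq vtx := nseq a.+1 hub.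

(* the cycle c_{n,i} as vertex list, given the length function L i = |c_{n,i}| *)
Definition cyc (L : nat -> nat) (i : nat) : seq vtx :=
  hub :: rcons [seq (i, j) | j <- iota 1 (L i).-1] hub.

Definition pathgen (n : nat) (L : nat -> nat) (i : nat) : seq vtx :=
  if n == 0 then loopa 10 else
  let S := \sum_(1 <= j < n.+1) L j in
  let k := 2 * (1 + S) in
  if i == n.+1 then loopa ((n + 2) ^ 2 * S)
  else if i == 1 then
    pcats ([seq pcat (loopa m) (rep 2 (cyc L 1)) | m <- iota 1 k]
           ++ [:: loopa 1] ++ [seq rep 2 (cyc L j) | j <- iota 2 (n - 1)]
           ++ [:: loopa 1])
  else pcats ([:: loopa 1] ++ [seq rep 2 (cyc L j) | j <- iota i (n.+1 - i)]
              ++ [:: loopa 1]).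

Fixpoint clen (n : nat) : nat -> nat :=
  match n with
  | 0 => fun _ => 0
  | m.+1 => fun i => (size (pathgen m (clen m) i)).-1
  end.

Definition P (n i : nat) : seq vtx := pathgen n (clen n) i.
Definition c (n i : nat) : seq vtx := cyc (clen n) i.

Definition inV (n : nat) (v : vtx) : Prop :=
  v = hub \/ exists i j, [/\ 1 <= i <= n, 1 <= j < clen n i & v = (i, j)].

Definition edge (n : nat) (u v : vtx) : Prop :=
  (u = hub /\ v = hub) \/
  exists i j, [/\ 1 <= i <= n, j < clen n i,
                 nth hub (c n i) j = u & nth hub (c n i) j.+1 = v].

Definition phi (n : nat) (v : vtx) : vtx :=
  if v == hub then hub else nth hub (P n v.1) v.2.

Definition inX (x : nat -> vtx) : Prop :=
  (forall n, inV n (x n)) /\ (forall n, phi n (x n.+1) = x n).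

Definition Tstep (x y : nat -> vtx) : Prop := inX y /\ forall n, edge n (x n) (y n).

Fixpoint Titer (k : nat) (x y : nat -> vtx) : Prop :=
  match k with
  | 0 => y = x
  | k'.+1 => exists z, Titer k' x z /\ Tstep z y
  end.

(* d(x,y) < 2^{-m}  iff  x_i = y_i for all i <= m *)
Definition close (m : nat) (x y : nat -> vtx) : Prop := forall i, i <= m -> x i = y i.

(* q in omega_T(x) = intersection over N of closure {T^k x : k >= N} *)
Definition in_omega (x q : nat -> vtx) : Prop :=
  forall N m, exists k y, N <= k /\ Titer k x y /\ close m y q.

Definition pt : nat -> vtx := fun _ => hub.

From mathcomp Require Import all_boot zify.
Set Implicit Arguments. Unset Strict Implicit.

(* Every vertex of G_m other than the hub v_{m,0} lies on a single cycle
   c_{m,i}, and its only outgoing edge moves forward along that cycle; hence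
   along any T-orbit the m-th coordinate returns to the hub after at most
   |c_{m,i}| steps.  Since phi maps the hub to the hub, all coordinates below
   m are then the hub as well, i.e. the orbit point is 2^-m-close to p.
   The orbit itself exists because T is total on X: every P_{n,i} is a closed
   walk in G_n that begins with the loop e_{n,0}. *)

Lemma pair_neq_hub i j : 0 < i -> (i, j) != hub.
Proof. by case: i. Qed.

Lemma nth_cyc L i t : nth hub (cyc L i) t = if 0 < t < L i then (i, t) else hub.
Proof.
rewrite /cyc; case: t => [|t] //=.
rewrite nth_rcons size_map size_iota.
case: ltnP => Ht.
  rewrite (nth_map 0) ?size_iota // nth_iota // add1n.
  by rewrite (_ : t.+1 < L i = true) //; lia.
rewrite (_ : t.+1 < L i = false); last lia.
by case: eqP.
Qed.

Lemma size_cyc L i : size (cyc L i) = (L i).-1.+2.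
Proof. by rewrite /cyc /= size_rcons size_map size_iota. Qed.

Lemma clenS n i : clen n.+1 i = (size (P n i)).-1.
Proof. by []. Qed.

Lemma loopa_prefix a : 0 < a -> exists t, loopa a = hub :: hub :: t.
Proof. by case: a => // a _; eexists. Qed.

Lemma P_prefix n i : 0 < i <= n.+1 -> exists t, P n i = hub :: hub :: t.
Proof.
elim: n i => [|n IH] i Hi; first exact: loopa_prefix.
rewrite /P /pathgen; case: ifP => _.
  apply: loopa_prefix; have [t Ht] := IH 1 isT.
  rewrite muln_gt0 expn_gt0 big_ltn // addn_gt0.
  by rewrite clenS Ht.
case: ifP => _; last by eexists.
by rewrite mulnDr muln1 addSn; eexists.
Qed.

Lemma clen_gt0 n i : 0 < i <= n -> 0 < clen n i.
Proof.
case: n => [|n] Hi; first lia.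
by rewrite clenS; have [|t ->] := @P_prefix n i.
Qed.

Section Walks.

Variable n : nat.

Fixpoint walk (s : seq vtx) : Prop :=
  match s with
  | a :: s' => (if s' is b :: _ then edge n a b else True) /\ walk s'
  | [::] => True
  end.

Lemma walk_nth s : walk s ->
  forall t, t.+1 < size s -> edge n (nth hub s t) (nth hub s t.+1).
Proof.
elim: s => [|a [|b s] IH] // [Hab Hw] [|t] //= Ht.
exact: IH.
Qed.

Lemma nth_walk s :
  (forall t, t.+1 < size s -> edge n (nth hub s t) (nth hub s t.+1)) -> walk s.
Proof.
elim: s => [|a s IH] //= Hs; split; last by apply: IH => t; apply: (Hs t.+1).
by case: s {IH} Hs => [|b s] // Hs; apply: (Hs 0).
Qed.

Lemma walk_cat a p q : walk (a :: p) -> walk (last a p :: q) -> walk (a :: p ++ q).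
Proof.
elim: p a => [|b p IH] a /=; first by move=> _.
by case=> Hab Hw Hq; split; last exact: IH.
Qed.

Definition hub_loop (s : seq vtx) :=
  [/\ exists t, s = hub :: t, last hub s = hub & walk s].

Lemma hub_loop_pcat p q : hub_loop p -> hub_loop q -> hub_loop (pcat p q).
Proof.
move=> [[p' ->] Lp Wp] [[q' ->] Lq Wq]; rewrite /pcat /=.
split; [by exists (p' ++ q') | by rewrite -cat_cons last_cat Lp |].
by apply: walk_cat => //; move: Lp => /= ->.
Qed.

Lemma hub_loop_pcats ps : (forall s, s \in ps -> hub_loop s) -> hub_loop (pcats ps).
Proof.
elim: ps => [|s ps IH] Hps /=; first by split => //; exists [::].
apply: hub_loop_pcat; first by apply: Hps; rewrite mem_head.
by apply: IH => s' Hs'; apply: Hps; rewrite inE Hs' orbT.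
Qed.

Lemma hub_loop_rep a s : hub_loop s -> hub_loop (rep a s).
Proof.
move=> Hs; have [[t Es] _ _] := Hs.
elim: a => [|a IH] /=; first by rewrite Es; split => //; exists [::].
exact: hub_loop_pcat.
Qed.

Lemma hub_loop_loopa a : hub_loop (loopa a).
Proof.
split; [by exists (nseq a hub) | by rewrite /loopa; elim: a |].
apply: nth_walk => t; rewrite size_nseq => Ht; left.
by rewrite !nth_nseq Ht ltnW.
Qed.

Lemma hub_loop_c i : 0 < i <= n -> hub_loop (c n i).
Proof.
move=> Hi; have Hpos := clen_gt0 Hi.
split; [by eexists | by rewrite /c /cyc /= last_rcons |].
apply: nth_walk => t; rewrite size_cyc => Ht.
by right; exists i, t; split => //; lia.
Qed.

End Walks.

Lemma hub_loop_P n i : 0 < i <= n.+1 -> hub_loop n (P n i).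
Proof.
case: n => [|n] Hi; first exact: hub_loop_loopa.
rewrite /P /pathgen; case: ifP => _; first exact: hub_loop_loopa.
have Hloop a : hub_loop n.+1 (loopa a) := hub_loop_loopa n.+1 a.
have Hrep j : 0 < j <= n.+1 -> hub_loop n.+1 (rep 2 (cyc (clen n.+1) j)).
  by move=> Hj; apply/hub_loop_rep/hub_loop_c.
case: ifP => Hi1; apply: hub_loop_pcats => s; rewrite !mem_cat ?mem_seq1.
- case/or4P => [/mapP [a _ ->] | /eqP -> | /mapP [j Hj ->] | /eqP ->] //.
    exact: hub_loop_pcat (Hloop a) (Hrep 1 _).
  by apply: Hrep; move: Hj; rewrite mem_iota; lia.
- case/or3P => [/eqP -> | /mapP [j Hj ->] | /eqP ->] //.
  by apply: Hrep; move: Hj Hi1 Hi; rewrite mem_iota => ? /eqP ? ?; lia.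
Qed.

Lemma phi_hub n : phi n hub = hub.
Proof. by rewrite /phi eqxx. Qed.

Lemma phi_c n i t : 0 < i <= n.+1 -> t <= clen n.+1 i ->
  phi n (nth hub (c n.+1 i) t) = nth hub (P n i) t.
Proof.
move=> Hi Ht; rewrite /c nth_cyc; case: ifP => Hin.
  by rewrite /phi (negbTE (pair_neq_hub _ _)) //; case/andP: Hi.
have [u Hu] := P_prefix Hi.
case: t Hin Ht => [|t] Hin Ht; first by rewrite phi_hub Hu.
have -> : t.+1 = (size (P n i)).-1 by move: Hin Ht; rewrite clenS; lia.
by have [_ L _] := hub_loop_P Hi; rewrite nth_last phi_hub.
Qed.

Lemma edge_succ n i j v : 0 < i -> edge n (i, j) v -> v = nth hub (c n i) j.+1.
Proof.
move=> Hi [[Eh _]|[i' [j' [_ _ Hu <-]]]]; first by move: Hi; case: Eh => ->.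
move: Hu; rewrite /c nth_cyc; case: ifP => _; first by case=> -> ->.
by move=> Eh; move: Hi; case: Eh => <-.
Qed.

Lemma edge_inV n u v : edge n u v -> inV n v.
Proof.
case=> [[_ ->]|[i [j [Hi Hj _ <-]]]]; first by left.
rewrite /c nth_cyc; case: ifP => H; last by left.
by right; exists i, j.+1.
Qed.

(* The first edge of each c_{n+1,i} lies over the loop e_{n,0}. *)
Lemma phi_edge_hub n v : edge n.+1 hub v -> phi n v = hub.
Proof.
case=> [[_ ->]|[i [j [Hi Hj Hu <-]]]]; first exact: phi_hub.
move: Hu; rewrite /c !nth_cyc; case: ifP => H1 Hu.
  by move: Hi; case: Hu => ->.
have -> : j = 0 by move: H1 Hj; case: j => //= j; lia.
case: ifP => _; last exact: phi_hub.
rewrite /phi (negbTE (pair_neq_hub _ _)) /=; last by case/andP: Hi.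
by have [u ->] := P_prefix Hi.
Qed.

Definition succ n (v : vtx) := nth hub (c n v.1) v.2.+1.

Lemma succE n i j : succ n (i, j) = nth hub (c n i) j.+1.
Proof. by []. Qed.

(* At the hub the successor in G_n is ambiguous, so T(y)_n is read off from
   level n+1 instead. *)
Definition Tmap (y : nat -> vtx) (n : nat) : vtx :=
  if y n.+1 == hub then hub else phi n (succ n.+1 (y n.+1)).

Lemma Tmap_edge y n : inX y -> edge n (y n) (Tmap y n) /\ inV n (Tmap y n).
Proof.
move=> [HV Hphi]; rewrite /Tmap -(Hphi n).
case: (HV n.+1) => [->|[i [j [Hi Hj ->]]]]; first by rewrite eqxx phi_hub; split; left.
have Hi0 : 0 < i by case/andP: Hi.
rewrite (negbTE (pair_neq_hub _ Hi0)) succE phi_c //; last by case/andP: Hj.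
suff He : edge n (phi n (i, j)) (nth hub (P n i) j.+1) by split; last exact: edge_inV He.
rewrite /phi (negbTE (pair_neq_hub _ Hi0)) /=.
have [_ _ W] := hub_loop_P Hi; apply: walk_nth W _ _.
by move: Hj; rewrite clenS; lia.
Qed.

Lemma phi_Tmap y n : inX y -> phi n (Tmap y n.+1) = Tmap y n.
Proof.
move=> Hy; have [HV Hphi] := Hy; have [He _] := Tmap_edge n.+1 Hy.
rewrite /Tmap in He *.
case: (HV n.+2) => [Eh|[i2 [j2 [Hi2 _ E2]]]].
  have Eh1 : y n.+1 = hub by rewrite -(Hphi n.+1) Eh phi_hub.
  by rewrite Eh Eh1 eqxx phi_hub.
have Hi20 : 0 < i2 by case/andP: Hi2.
rewrite E2 (negbTE (pair_neq_hub _ Hi20)) in He *.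
case: (HV n.+1) He => [->|[i [j [Hi _ ->]]]] He; first by rewrite eqxx phi_edge_hub.
have Hi0 : 0 < i by case/andP: Hi.
by rewrite (negbTE (pair_neq_hub _ Hi0)) (edge_succ Hi0 He).
Qed.

Lemma Tstep_Tmap y : inX y -> Tstep y (Tmap y).
Proof.
move=> Hy; split; last by move=> n; exact: (Tmap_edge n Hy).1.
by split=> n; [exact: (Tmap_edge n Hy).2 | exact: phi_Tmap].
Qed.

Lemma Titer_inX x k y : inX x -> Titer k x y -> inX y.
Proof. by case: k => [|k] /= Hx; [move=> -> | case=> z [_ [Hy _]]]. Qed.

Lemma Titer_total x k : inX x -> exists y, Titer k x y.
Proof.
move=> Hx; elim: k => [|k [y Hy]]; first by exists x.
by exists (Tmap y), y; split; last exact/Tstep_Tmap/(Titer_inX Hx Hy).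
Qed.

Lemma close_pt y m : inX y -> y m = hub -> close m y pt.
Proof.
move=> [_ Hphi] Hm i Him.
have Hdown d : y (m - d) = hub.
  elim: d => [|d IH]; first by rewrite subn0.
  case: (ltnP d m) => Hd; last by rewrite (_ : m - d.+1 = m - d) //; lia.
  by rewrite -(Hphi (m - d.+1)) (_ : (m - d.+1).+1 = m - d) ?IH ?phi_hub //; lia.
by rewrite -(subKn Him) Hdown.
Qed.

Definition dist_hub m (v : vtx) := if v == hub then 0 else clen m v.1 - v.2.

Lemma dist_hub_Tstep m y z : inX y -> Tstep y z -> y m != hub ->
  dist_hub m (z m) < dist_hub m (y m).
Proof.
move=> [HV _] [_ Hz]; case: (HV m) => [->|[i [j [Hi Hj Ey]]]]; first by rewrite eqxx.
have Hi0 : 0 < i by case/andP: Hi.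
have Hneq k : ((i, k) == hub) = false by apply/negbTE/pair_neq_hub.
move: (Hz m); rewrite Ey => /(edge_succ Hi0) -> _.
rewrite /dist_hub /c nth_cyc Hneq /=.
by case: (ltnP j.+1) => Hlt; rewrite ?eqxx ?Hneq /=; lia.
Qed.

Lemma Titer_reach_hub x m k y : inX x -> Titer k x y ->
  exists k' y', [/\ k <= k', Titer k' x y' & y' m = hub].
Proof.
move=> Hx; move: (ltnSn (dist_hub m (y m))); move: {2}(dist_hub m (y m)).+1 => d.
elim: d k y => [//|d IH] k y Hd Hk.
have Hy := Titer_inX Hx Hk.
case: (eqVneq (y m) hub) => Hym; first by exists k, y.
have Hk1 : Titer k.+1 x (Tmap y) by exists y; split; last exact: Tstep_Tmap.
have [|k' [y' [Hkk' Hk' Hy']]] := IH k.+1 (Tmap y) _ Hk1.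
  exact: leq_trans (dist_hub_Tstep Hy (Tstep_Tmap Hy) Hym) Hd.
by exists k', y'; split => //; apply: ltnW.
Qed.

Theorem lemma3p3 (x : nat -> vtx) (hx : inX x) : in_omega x pt.
Proof.
move=> N m.
have [y Hy] := Titer_total N hx.
have [k [z [HNk Hz Hzm]]] := Titer_reach_hub m hx Hy.
exists k, z; split => //; split => //.
exact: close_pt (Titer_inX hx Hz) Hzm.
Qed.
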